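(* Let $(\Xi,\mathcal{F},P)$ be a probability space and $\{y_t\}_{t\in\mathbb{Z}}$ a real, mean-zero, covariance-stationary series on it; put $\mathcal{F}_t=\sigma(y_s,\,s\le t)$. Assume (D1) $P\{y_1^2>0\}=1$; (D2) $y_t=\sum_{s=0}^{\infty}\kappa_s\epsilon_{t-s}$ with $\kappa_0=1$, $\sum_s|\kappa_s|<\infty$, $\kappa(z)=\sum_s\kappa_s z^s\neq 0$ for $|z|\le 1$, where $\{\epsilon_t\}$ is a martingale difference sequence with respect to $\{\mathcal{F}_t\}$; (D3) $E[\epsilon_t^2\mid\mathcal{F}_{t-1}]=\sigma_\epsilon^2$ a.s. (constant); (D4) $\sup_t|\epsilon_t|\le K<\infty$ a.s. Fix $\beta\in[0,1]$, let $\theta_t,\phi_t$ be generated by the recursive algorithm in the context, and assume there are random variables $k^*$ (integer, $0\le k^*<\infty$) and $K^*\in(0,1)$ such that a.s. $|\theta_{t+k^*}|\le K^*$ for all $t\ge1$. Then for each integer $u\ge0$, $$\frac1t\sum_{s=1}^t\phi_s^2=\frac1t\sum_{s=1}^t\Big(\sum_{j=0}^u\kappa_j^\phi(s)\epsilon_{s-j}\Big)^2+r_1(t,u),$$ where almost surely $\lim_{u\to\infty}\limsup_{t\to\infty}|r_1(t,u)|=0$.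
   Context: Recursive algorithm: set $\theta_1=0$, $\bar P_1=0$, $e_1=y_1$, $x_1=y_1$, $\phi_1=x_1$, and for $t\ge2$: $x_t=y_t-\beta\theta_{t-1}x_{t-1}$; $e_t=y_t-\theta_{t-1}e_{t-1}$; $\phi_t=x_t-\theta_{t-1}\phi_{t-1}$; $\bar P_t=\frac1t\sum_{s=1}^{t-1}\phi_s^2$; $\theta_t=\theta_{t-1}+\bar P_t^{-1}\frac1t\phi_{t-1}e_t$. Coefficients: for $t\ge1$, $j\ge0$ (empty products equal 1), $\kappa_j^x(t)=\sum_{l=0}^{\min(j,t-1)}(-\beta)^l\kappa_{j-l}\prod_{i=1}^l\theta_{t-i}$; $\kappa_j^\phi(1)=\kappa_j$ and $\kappa_j^\phi(t)=\kappa_j^x(t)-\theta_{t-1}\kappa_{j-1}^\phi(t-1)$ for $t\ge2$, with $\kappa_{-1}^\phi(\cdot):=0$; these are the coefficients in $\phi_t=\sum_{j\ge0}\kappa_j^\phi(t)\epsilon_{t-j}$. *)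

From HB Require Import structures.
From mathcomp Require Import all_boot all_algebra.
From mathcomp Require Import all_classical all_reals all_analysis.
From mathcomp Require Import complex.
Set Implicit Arguments. Unset Strict Implicit. Unset Printing Implicit Defensive.
Import GRing.Theory Num.Theory numFieldNormedType.Exports.
Local Open Scope classical_set_scope.
Local Open Scope ring_scope.

Section Algo.
Variable R : realType.

(* state of the recursive algorithm at time t: theta_t, x_t, e_t, phi_t,
   and ss = sum_{s=1}^t phi_s^2 *)
Record st := St { th : R; xx : R; ee : R; ph : R; ss : R }.

(* algo beta y n = state at time t = n+1; y t is y_t for t >= 1 *)
Fixpoint algo (beta : R) (y : nat -> R) (n : nat) : st :=
  match n with
  | 0 => St 0 (y 1%N) (y 1%N) (y 1%N) (y 1%N ^+ 2)
  | n'.+1 =>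
      let p := algo beta y n' in
      let t := n'.+2 in
      let x := y t - beta * th p * xx p in
      let e := y t - th p * ee p in
      let phi := x - th p * ph p in
      let Pbar := ss p / t%:R in            (* (1/t) sum_{s=1}^{t-1} phi_s^2 *)
      let theta := th p + Pbar^-1 * (t%:R^-1 * ph p * e) in
      St theta x e phi (ss p + phi ^+ 2)
  end.

Definition theta beta y (t : nat) : R := th (algo beta y t.-1).
Definition phi beta y (t : nat) : R := ph (algo beta y t.-1).

Definition kx (beta : R) (y : nat -> R) (kappa : nat -> R) (t j : nat) : R :=
  \sum_(0 <= l < (minn j t.-1).+1)
     (- beta) ^+ l * kappa (j - l)%N * \prod_(1 <= i < l.+1) theta beta y (t - i).

(* kphi_aux n j = kappa^phi_j(n+1) *)
Fixpoint kphi_aux beta y kappa (n j : nat) : R :=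
  match n with
  | 0 => kappa j
  | n'.+1 => kx beta y kappa n'.+2 j -
             theta beta y n'.+1 *
             (match j with 0 => 0 | j'.+1 => kphi_aux beta y kappa n' j' end)
  end.

Definition kphi beta y kappa (t j : nat) : R := kphi_aux beta y kappa t.-1 j.

(* kappa(z) = sum_s kappa_s z^s, computed via its real and imaginary parts *)
Definition kappaC (kappa : nat -> R) (z : R[i]) : R[i] :=
  (limn (series (fun s => (kappa s * complex.Re (z ^+ s) : R)))
   +i* limn (series (fun s => (kappa s * complex.Im (z ^+ s) : R))))%C.

End Algo.

Definition Fsig d (T : measurableType d) (R : realType) (y : int -> T -> R)
  (t : int) : set (set T) :=
  <<s \bigcup_(s in [set s : int | (s <= t)%R]) preimage_set_system setT (y s) measurable >>.

From HB Require Import structures.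
From mathcomp Require Import all_boot all_algebra.
From mathcomp Require Import all_classical all_reals all_analysis.
From mathcomp Require Import complex.
From mathcomp Require Import zify ring lra.
Set Implicit Arguments. Unset Strict Implicit. Unset Printing Implicit Defensive.
Import order.Order.TTheory GRing.Theory Num.Theory numFieldNormedType.Exports.
Local Open Scope classical_set_scope.
Local Open Scope ring_scope.

(* The argument is pathwise and uses only the summability of kappa, (D4) and the
   bound on theta.  Off a null set, |eps_t| <= K and |theta_s| <= K* < 1 for
   s > k*, so x_t and phi_t solve contracting recursions
   z_(s+1) = w_(s+1) - c_s z_s with |c_s| <= K*, hence are eventually bounded.
   The truncated sums sum_(j <= u) kappa^x_j(s) eps_(s-j) and
   sum_(j <= u) kappa^phi_j(s) eps_(s-j) obey the same recursions with the lag u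
   dropping by one per step, driven by the truncated MA(oo) sums of y_s, whose
   error is at most K sum_(j > u) |kappa_j|.  So for s > k* + u the truncation
   error of phi_s is at most some h(u) -> 0, thus
   |phi_s^2 - (truncated phi_s)^2| <= H(u) -> 0, and averaging over s gives
   limsup_t |r_1(t,u)| <= H(u). *)

Section TruncatedConvolution.
Variable R : comRingType.

Definition trunc_conv (c : nat -> R) (e : int -> R) (s u : nat) : R :=
  \sum_(0 <= j < u.+1) c j * e (s%:Z - j%:Z).

Lemma trunc_conv0 c e s : trunc_conv c e s 0 = c 0%N * e s.
Proof. by rewrite /trunc_conv big_nat1 subr0. Qed.

Lemma trunc_convSS c e s u :
  trunc_conv c e s.+1 u.+1 = c 0%N * e s.+1 + trunc_conv (fun j => c j.+1) e s u.
Proof.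
rewrite /trunc_conv big_nat_recl // subr0; congr (_ + _).
by apply: eq_bigr => j _; congr (_ * e _); lia.
Qed.

Lemma trunc_convBM c d a e s u :
  trunc_conv (fun j => c j - a * d j) e s u =
  trunc_conv c e s u - a * trunc_conv d e s u.
Proof. by rewrite /trunc_conv mulr_sumr -sumrB; apply: eq_bigr => j _; ring. Qed.

End TruncatedConvolution.

Section AlgorithmRecursions.
Variables (R : realType) (b : R) (y : nat -> R) (kappa : nat -> R).

Definition xalg (t : nat) : R := xx (algo b y t.-1).

Lemma xalgSS s : xalg s.+2 = y s.+2 - b * theta b y s.+1 * xalg s.+1.
Proof. by []. Qed.

Lemma phiSS s : phi b y s.+2 = xalg s.+2 - theta b y s.+1 * phi b y s.+1.
Proof. by []. Qed.

Lemma kx0 t : kx b y kappa t 0 = kappa 0%N.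
Proof. by rewrite /kx minnC big_nat1 expr0 mul1r big_geq // mulr1. Qed.

Lemma kxSS s j :
  kx b y kappa s.+2 j.+1 = kappa j.+1 - b * theta b y s.+1 * kx b y kappa s.+1 j.
Proof.
rewrite /kx /= minnSS big_nat_recl // expr0 mul1r subn0 big_geq // mulr1.
rewrite mulr_sumr -sumrN; congr (_ + _); apply: eq_bigr => l _.
rewrite big_nat_recl // subSS exprS.
under [\prod_(_ <= _ < _) _]eq_bigr => i _ do rewrite subSS.
ring.
Qed.

Lemma kphi0 t : kphi b y kappa t 0 = kappa 0%N.
Proof. by case: t => [|[|t]] //; rewrite /kphi /= kx0 mulr0 subr0. Qed.

Lemma kphiSS s j :
  kphi b y kappa s.+2 j.+1 =
  kx b y kappa s.+2 j.+1 - theta b y s.+1 * kphi b y kappa s.+1 j.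
Proof. by []. Qed.

Lemma trunc_conv_kxSS e s u :
  trunc_conv (kx b y kappa s.+2) e s.+2 u.+1 =
  trunc_conv kappa e s.+2 u.+1 - b * theta b y s.+1 * trunc_conv (kx b y kappa s.+1) e s.+1 u.
Proof.
rewrite !trunc_convSS kx0.
under [trunc_conv (fun j => kx _ _ _ _ j.+1) _ _ _]eq_bigr => j _ do rewrite kxSS.
by rewrite -/(trunc_conv _ _ _ _) (trunc_convBM (fun j => kappa j.+1)) addrA.
Qed.

Lemma trunc_conv_kphiSS e s u :
  trunc_conv (kphi b y kappa s.+2) e s.+2 u.+1 =
  trunc_conv (kx b y kappa s.+2) e s.+2 u.+1
  - theta b y s.+1 * trunc_conv (kphi b y kappa s.+1) e s.+1 u.
Proof.
rewrite !trunc_convSS kx0 kphi0.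
under [trunc_conv (fun j => kphi _ _ _ _ j.+1) _ _ _]eq_bigr => j _ do rewrite kphiSS.
by rewrite -/(trunc_conv _ _ _ _) (trunc_convBM (fun j => kx b y kappa s.+2 j.+1)) addrA.
Qed.

End AlgorithmRecursions.

Section NormRecursion.
Variable R : realFieldType.

Lemma normB_mul_le (w c z q : R) : `|c| <= q -> `|w - c * z| <= `|w| + q * `|z|.
Proof.
move=> cq; apply: le_trans (ler_normB _ _) _.
by rewrite lerD2l normrM ler_wpM2r.
Qed.

Lemma normBB_mul_le (w w' c z z' q : R) : `|c| <= q ->
  `|(w - c * z) - (w' - c * z')| <= `|w - w'| + q * `|z - z'|.
Proof.
have -> : (w - c * z) - (w' - c * z') = (w - w') - c * (z - z') by ring.
exact: normB_mul_le.
Qed.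

Lemma contraction_bounded (a : nat -> R) (A q : R) (N : nat) : 0 <= q -> q < 1 ->
  (forall s, (N < s)%N -> `|a s.+1| <= A + q * `|a s|) ->
  exists M, forall s, (N < s)%N -> `|a s| <= M.
Proof.
move=> q0 q1 ha; pose M := Num.max `|a N.+1| (A / (1 - q)).
have AM : A + q * M <= M.
  have : A / (1 - q) <= M by rewrite le_max lexx orbT.
  by rewrite ler_pdivrMr ?subr_gt0 //; lra.
exists M; suff bnd k : `|a (N.+1 + k)%N| <= M by move=> s /subnKC <-.
elim: k => [|k IH]; first by rewrite addn0 le_max lexx.
rewrite addnS; apply: le_trans (ha _ (ltn_addr _ (ltnSn N))) _.
by apply: le_trans AM; rewrite lerD2l ler_wpM2l.
Qed.

End NormRecursion.

Section VanishingInLag.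
Variable R : archiRealFieldType.

Definition vanishes_in_lag (N : nat) (E : nat -> nat -> R) :=
  exists h : nat -> R, [/\ h @ \oo --> 0, forall u, 0 <= h u &
    forall u s, (N + u < s)%N -> `|E s u| <= h u].

Fixpoint contraction_bound (q M : R) (G : nat -> R) (u : nat) : R :=
  if u is u'.+1 then G u + q * contraction_bound q M G u' else M.

Lemma contraction_bound_ge0 (q M : R) (G : nat -> R) : 0 <= q -> 0 <= M ->
  (forall v, 0 <= G v) -> forall u, 0 <= contraction_bound q M G u.
Proof. by move=> q0 M0 G0; elim=> //= u IH; rewrite addr_ge0 ?mulr_ge0. Qed.

Lemma contraction_bound_cvg0 (q M : R) (G : nat -> R) : 0 <= q -> q < 1 -> 0 <= M ->
  (forall v, 0 <= G v) -> G @ \oo --> 0 -> contraction_bound q M G @ \oo --> 0.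
Proof.
move=> q0 q1 M0 G0 G_cvg0; set c := contraction_bound q M G.
have c0 := contraction_bound_ge0 q0 M0 G0.
apply/cvgr0Pnorm_le => e e0.
have e20 : 0 < e / 2 by rewrite divr_gt0.
have e2q0 : 0 < e / 2 * (1 - q) by rewrite mulr_gt0 ?subr_gt0.
have [U _ GU] := (cvgr0Pnorm_le G).1 G_cvg0 _ e2q0.
have cU k : c (U + k)%N <= e / 2 + q ^+ k * c U.
  elim: k => [|k IH]; first by rewrite addn0 expr0 mul1r lerDr ltW.
  rewrite addnS /c /= -/c exprS -mulrA.
  have : G (U + k).+1 <= e / 2 * (1 - q) by apply: le_trans (ler_norm _) (GU _ _) => /=; lia.
  have := ler_wpM2l q0 IH; set E := e / 2; set Q := q ^+ k * c U; nra.
have qc : (fun k => q ^+ k * c U) @ \oo --> 0.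
  by rewrite -(mul0r (c U)); apply: cvgMl; apply: cvg_expr; rewrite ger0_norm.
have [V _ qV] := (cvgr0Pnorm_le _).1 qc _ e20.
exists (U + V)%N => // n /= Vn; rewrite ger0_norm // -(subnKC (leq_trans (leq_addr V U) Vn)).
apply: le_trans (cU _) _; rewrite [e in _ <= e](splitr e) lerD2l.
by apply: le_trans (ler_norm _) (qV _ _) => /=; lia.
Qed.

Lemma vanishes_in_lag_contraction (E F : nat -> nat -> R) (q : R) (N : nat) :
  0 <= q -> q < 1 ->
  (forall s u, (N < s)%N -> `|E s.+1 u.+1| <= `|F s.+1 u.+1| + q * `|E s u|) ->
  (exists M, forall s, (N < s)%N -> `|E s 0%N| <= M) ->
  vanishes_in_lag N F -> vanishes_in_lag N E.
Proof.
move=> q0 q1 hE [M hM] [G [G_cvg0 G0 hF]].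
have M0 : 0 <= M := le_trans (normr_ge0 _) (hM _ (ltnSn N)).
exists (contraction_bound q M G); split.
- exact: contraction_bound_cvg0.
- exact: contraction_bound_ge0.
elim=> [|u IH] [|s] lt_s //=; first by apply: hM; rewrite -(addn0 N).
apply: le_trans (hE s u _) _; first lia.
by rewrite lerD ?hF ?ler_wpM2l ?IH //; lia.
Qed.

Lemma vanishes_in_lag_sqr (a : nat -> R) (A : nat -> nat -> R) (N : nat) :
  (exists M, forall s, (N < s)%N -> `|a s| <= M) ->
  vanishes_in_lag N (fun s u => a s - A s u) ->
  vanishes_in_lag N (fun s u => a s ^+ 2 - A s u ^+ 2).
Proof.
move=> [M hM] [h [h_cvg0 h0 hE]].
have M0 : 0 <= M := le_trans (normr_ge0 _) (hM _ (ltnSn N)).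
exists (fun u => h u * (2 * M + h u)); split.
- by rewrite -(mul0r (2 * M + 0)); apply: cvgM => //; apply: cvgD => //; apply: cvg_cst.
- by move=> u; rewrite mulr_ge0 ?addr_ge0 ?mulr_ge0.
move=> u s lt_s; have Es := hE u s lt_s.
have -> : a s ^+ 2 - A s u ^+ 2 = (a s - A s u) * (2 * a s - (a s - A s u)) by ring.
rewrite normrM ler_pM //; apply: le_trans (ler_normB _ _) _.
by rewrite lerD // normrM ger0_norm // ler_wpM2l // hM //; lia.
Qed.

End VanishingInLag.

Lemma series_tail_le (R : realFieldType) (a b : nat -> R) (l : R) (n : nat) :
  (forall j, `|a j| <= b j) -> cvgn (series b) -> series a @ \oo --> l ->
  `|l - series a n| <= limn (series b) - series b n.
Proof.
move=> ab b_cvg a_cvg.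
have b0 j : 0 <= b j := le_trans (normr_ge0 _) (ab j).
have tail_cvg : `|series a m - series a n| @[m --> \oo] --> `|l - series a n|.
  by apply: cvg_norm; apply: cvgB => //; apply: cvg_cst.
rewrite -(cvg_lim _ tail_cvg) //.
apply: limr_le; first by apply/cvg_ex; eexists; exact: tail_cvg.
near=> m; have nm : (n <= m)%N by near: m; exists n.
rewrite !sub_series_geq //; apply: le_trans (ler_norm_sum _ _ _) _.
apply: le_trans (ler_sum _ (fun j _ => ab j)) _.
rewrite -sub_series_geq // lerB //.
by apply: nondecreasing_cvgn_le => //; apply: nondecreasing_series.
Unshelve. all: by end_near.
Qed.

Section LimsupOfAverages.
Variable R : realType.

Lemma le_limn_esup (u v : (\bar R)^nat) :
  (forall n, (u n <= v n)%E) -> (limn_esup u <= limn_esup v)%E.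
Proof.
move=> uv; rewrite !limn_esup_lim; apply: lee_lim; [exact: is_cvg_esups|exact: is_cvg_esups|].
apply: nearW => n; apply: ge_ereal_sup => _ [k /= nk <-].
by apply: le_trans (uv k) _; apply: ereal_sup_ubound; exists k.
Qed.

Lemma limn_esup_le_harmonic (v : nat -> R) (C H : R) :
  (forall t, v t <= C * t%:R^-1 + H) -> (limn_esup (fun t => (v t)%:E) <= H%:E)%E.
Proof.
move=> vle; have harmonic_cvg : (C * t%:R^-1 + H)%:E @[t --> \oo] --> H%:E.
  apply: cvg_EFin; first exact: nearW.
  rewrite -[X in _ --> X]add0r -(mulr0 C); apply: cvgD; last exact: cvg_cst.
  by apply: cvgMr; rewrite -cvg_shiftS; exact: cvg_harmonic.
rewrite -(cvg_limn_einf_sup harmonic_cvg).2.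
by apply: le_limn_esup => t; rewrite lee_fin.
Qed.

Lemma sum_le_eventual_bound (D : nat -> R) (H : R) (M t : nat) :
  (forall s, 0 <= D s) -> 0 <= H -> (forall s, (M < s)%N -> D s <= H) ->
  \sum_(1 <= s < t.+1) D s <= H *+ t + \sum_(1 <= s < M.+1) D s.
Proof.
move=> D0 H0 DH; have [tM|Mt] := leqP t M.
  rewrite [X in _ <= _ + X](big_cat_nat _ (n := t.+1)) //=.
  by rewrite addrCA lerDl addr_ge0 ?mulrn_wge0 ?sumr_ge0.
rewrite (big_cat_nat _ (n := M.+1)) //=; last by rewrite ltnS ltnW.
rewrite addrC lerD2r.
apply: le_trans (_ : \sum_(M.+1 <= s < t.+1) H <= _).
  by apply: ler_sum_nat => s /andP[Ms _]; apply: DH.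
by rewrite sumr_const_nat ler_wpMn2l //; lia.
Qed.

Lemma avg_diff_limn_esup_cvg0 (a : nat -> R) (A : nat -> nat -> R) (N : nat) :
  vanishes_in_lag N (fun s u => a s - A s u) ->
  (fun u => limn_esup (fun t => (`|t%:R^-1 * (\sum_(1 <= s < t.+1) a s)
     - t%:R^-1 * (\sum_(1 <= s < t.+1) A s u)|)%:E)) @ \oo --> 0%E.
Proof.
move=> [h [h_cvg0 h0 hE]].
apply: (@squeeze_cvge _ _ _ _ (fun=> 0%E) _ (fun u => (h u)%:E)); last 2 first.
- exact: cvg_cst.
- by apply: cvg_EFin; [exact: nearW | exact: h_cvg0].
apply: nearW => u; apply/andP; split.
  rewrite -[0%E](cvg_limn_einf_sup (cvg_cst 0%E)).2.
  by apply: le_limn_esup => t; rewrite lee_fin.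
apply: (limn_esup_le_harmonic (C := \sum_(1 <= s < (N + u).+1) `|a s - A s u|)) => -[|t].
  by rewrite invr0 !mul0r subr0 normr0 mulr0 add0r.
set C := \sum_(1 <= s < (N + u).+1) _.
rewrite -(mulrBr t.+1%:R^-1) -sumrB normrM ger0_norm ?invr_ge0 //.
have -> : C / t.+1%:R + h u = t.+1%:R^-1 * (h u *+ t.+1 + C).
  by rewrite -mulr_natr; field; rewrite nat1r pnatr_eq0.
apply: ler_wpM2l; first by rewrite invr_ge0.
apply: le_trans (ler_norm_sum _ _ _) _.
by apply: sum_le_eventual_bound => // s; apply: hE.
Qed.

End LimsupOfAverages.

Section Pathwise.
Variables (R : realType) (b : R) (ys : nat -> R) (e : int -> R) (kappa : nat -> R).
Variables (K q : R) (N : nat).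
Hypotheses (b01 : 0 <= b <= 1) (kappa_summable : cvgn (series (fun j => `|kappa j|))).
Hypotheses (e_bounded : forall t, `|e t| <= K)
  (ys_ma : forall s : nat, series (fun j => kappa j * e (s%:Z - j%:Z)) @ \oo --> ys s).
Hypotheses (q_ge0 : 0 <= q) (q_lt1 : q < 1)
  (theta_contr : forall s, (N < s)%N -> `|theta b ys s| <= q).

Let kb j := K * `|kappa j|.
Let kb_summable : cvgn (series kb) := @is_cvg_seriesZ R _ K kappa_summable.
Let ma_tail u := limn (series kb) - series kb u.

Lemma ys_trunc_le s u :
  `|ys s - series (fun j => kappa j * e (s%:Z - j%:Z)) u| <= ma_tail u.
Proof.
apply: series_tail_le kb_summable (@ys_ma s) => j.
by rewrite normrM mulrC ler_wpM2r.
Qed.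

Lemma ys_trunc_vanishes : vanishes_in_lag N (fun s u => ys s - trunc_conv kappa e s u).
Proof.
exists (fun u => ma_tail u.+1); split.
- rewrite -(subrr (limn (series kb))); apply: cvgB; first exact: cvg_cst.
  by rewrite (cvg_shiftS (series kb)).
- move=> u; rewrite subr_ge0; apply: nondecreasing_cvgn_le => //.
  by apply: nondecreasing_series => j _ _; rewrite /kb mulr_ge0 ?(le_trans _ (e_bounded 0)).
- by move=> u s _; apply: ys_trunc_le.
Qed.

Lemma btheta_contr s : (N < s)%N -> `|b * theta b ys s| <= q.
Proof.
move=> Ns; case/andP: b01 => b0 b1; rewrite normrM ger0_norm //.
by rewrite -[q]mul1r ler_pM ?theta_contr.
Qed.

Lemma xalg_bounded : exists M, forall s, (N < s)%N -> `|xalg b ys s| <= M.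
Proof.
apply: (contraction_bounded (A := ma_tail 0) q_ge0 q_lt1) => -[//|s] Ns.
rewrite xalgSS; apply: le_trans (normB_mul_le _ _ (btheta_contr Ns)) _.
by have := ys_trunc_le s.+2 0; rewrite /series /= big_geq // subr0 lerD2r.
Qed.

Lemma phi_bounded : exists M, forall s, (N < s)%N -> `|phi b ys s| <= M.
Proof.
have [M xM] := xalg_bounded.
apply: (contraction_bounded (A := M) q_ge0 q_lt1) => -[//|s] Ns.
rewrite phiSS; apply: le_trans (normB_mul_le _ _ (theta_contr Ns)) _.
by rewrite lerD2r xM // ltnW.
Qed.

Lemma trunc_conv0_bounded (a : nat -> R) (c : nat -> nat -> R) :
  (exists M, forall s, (N < s)%N -> `|a s| <= M) -> (forall s, c s 0%N = kappa 0%N) ->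
  exists M, forall s, (N < s)%N -> `|a s - trunc_conv (c s) e s 0| <= M.
Proof.
move=> [M aM] c0; exists (M + `|kappa 0%N| * K) => s Ns.
rewrite trunc_conv0 c0; apply: le_trans (ler_normB _ _) _.
by rewrite normrM lerD ?aM ?ler_wpM2l.
Qed.

Lemma xalg_trunc_vanishes :
  vanishes_in_lag N (fun s u => xalg b ys s - trunc_conv (kx b ys kappa s) e s u).
Proof.
apply: (vanishes_in_lag_contraction q_ge0 q_lt1 _ _ ys_trunc_vanishes).
- move=> [//|s] u Ns.
  by rewrite xalgSS trunc_conv_kxSS normBB_mul_le ?btheta_contr.
- apply: trunc_conv0_bounded xalg_bounded _ => s; exact: kx0.
Qed.

Lemma phi_trunc_vanishes :
  vanishes_in_lag N (fun s u => phi b ys s - trunc_conv (kphi b ys kappa s) e s u).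
Proof.
apply: (vanishes_in_lag_contraction q_ge0 q_lt1 _ _ xalg_trunc_vanishes).
- move=> [//|s] u Ns.
  by rewrite phiSS trunc_conv_kphiSS normBB_mul_le ?theta_contr.
- apply: trunc_conv0_bounded phi_bounded _ => s; exact: kphi0.
Qed.

Lemma avg_phi_sqr_trunc_cvg0 :
  (fun u => limn_esup (fun t => (`|t%:R^-1 * (\sum_(1 <= s < t.+1) phi b ys s ^+ 2)
     - t%:R^-1 * (\sum_(1 <= s < t.+1)
         (\sum_(0 <= j < u.+1) kphi b ys kappa s j * e (s%:Z - j%:Z)) ^+ 2)|)%:E))
  @ \oo --> 0%E.
Proof.
apply: (avg_diff_limn_esup_cvg0 (A := fun s u => trunc_conv (kphi b ys kappa s) e s u ^+ 2)).
exact: vanishes_in_lag_sqr phi_bounded phi_trunc_vanishes.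
Qed.

End Pathwise.

Theorem lemma4p2 (d : measure_display) (T : measurableType d) (R : realType)
  (P : probability T R)
  (y eps : int -> T -> R) (kappa : nat -> R) (sigma2 : R) (beta : R) :
  (* {y_t} real, mean-zero, covariance-stationary *)
  (forall t, measurable_fun setT (y t)) ->
  (forall t, P.-integrable setT (fun w => ((y t w) ^+ 2)%:E)) ->
  (forall t, ('E_P[y t] = 0)%E) ->
  (forall t h, ('E_P[fun w => (y t w * y (t + h) w)%R] = 'E_P[fun w => (y 0 w * y h w)%R])%E) ->
  (* (D1) *)
  P [set w | 0 < y 1 w ^+ 2] = 1%E ->
  (* (D2) *)
  kappa 0%N = 1 ->
  cvg (series (fun s => `|kappa s|) @ \oo) ->
  (forall z : R[i], `|z| <= 1 -> kappaC kappa z != 0) ->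
  {ae P, forall w, forall t : int,
      series (fun s => kappa s * eps (t - s%:Z) w) @ \oo --> y t w} ->
  (* {eps_t} is a martingale difference sequence w.r.t. F_t = sigma(y_s, s <= t) *)
  (forall t B, measurable B -> Fsig y t (eps t @^-1` B)) ->
  (forall t, P.-integrable setT (fun w => (eps t w)%:E)) ->
  (forall t A, Fsig y (t - 1) A -> (\int[P]_(w in A) (eps t w)%:E = 0)%E) ->
  (* (D3) *)
  (forall t A, Fsig y (t - 1) A ->
     (\int[P]_(w in A) ((eps t w) ^+ 2)%:E = sigma2%:E * P A)%E) ->
  (* (D4) *)
  (exists K : R, {ae P, forall w, forall t, `|eps t w| <= K}) ->
  (* beta in [0,1] *)
  0 <= beta <= 1 ->
  (* a.s. |theta_{t+k*}| <= K* for all t >= 1, some 0 <= k* < oo, K* in (0,1) *)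
  {ae P, forall w, exists (ks : nat) (Ks : R), 0 < Ks < 1 /\
      forall t : nat, (1 <= t)%N ->
        `|theta beta (fun s : nat => y s%:Z w) (t + ks)| <= Ks} ->
  (* conclusion: a.s. lim_{u -> oo} limsup_{t -> oo} |r_1(t,u)| = 0 *)
  {ae P, forall w,
     let ys := fun s : nat => y s%:Z w in
     let r1 := fun (t u : nat) =>
       t%:R^-1 * (\sum_(1 <= s < t.+1) phi beta ys s ^+ 2)
       - t%:R^-1 * (\sum_(1 <= s < t.+1)
            (\sum_(0 <= j < u.+1) kphi beta ys kappa s j * eps (s%:Z - j%:Z) w) ^+ 2) in
     (fun u => limn_esup (fun t => (`|r1 t u|)%:E)) @ \oo --> 0%E}.
Proof.
move=> _ _ _ _ _ _ kappa_summable _ y_ma _ _ _ _ [K eps_bounded] b01 theta_eventually.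
apply: filterS3 y_ma eps_bounded theta_eventually.
move=> w y_ma_w eps_bounded_w [ks [Ks [/andP[Ks0 Ks1] theta_w]]].
apply: (avg_phi_sqr_trunc_cvg0 (N := ks) b01 kappa_summable eps_bounded_w) (ltW Ks0) Ks1 _.
- by move=> s; apply: y_ma_w.
- move=> s ks_s; rewrite -(subnK (ltnW ks_s)).
  by apply: theta_w; rewrite subn_gt0.
Qed.
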